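(* Let $\langle B,\wedge,{}'\rangle$ be an algebra with $\wedge$ binary and ${}'$ unary satisfying $x\wedge y\approx y\wedge x$, $x\wedge(y\wedge z)\approx(x\wedge y)\wedge z$, $x''\approx x$, and $x'\approx (x\wedge y)'\wedge(x\wedge y')'$. Then for all $x,z\in B$, writing $0=z\wedge z'$, we have $0'\wedge(x\wedge x)'=x'$.
   Context: In such an algebra the element $z\wedge z'$ does not depend on $z$; the paper denotes it $0$. *)


(* Applying the axiom to x and to x'' = x writes x ∧ x' as the meet of the four
   elements (x ∧ y)', (x ∧ y')', (x' ∧ y)', (x' ∧ y')', which is symmetric in x
   and y; hence x ∧ x' does not depend on x.  The axiom at (x, x) then reads
   x' = (x ∧ x)' ∧ (x ∧ x')' = (x ∧ x)' ∧ 0'. *)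

Section CommutativeSemigroup.

Variables (B : Type) (meet : B -> B -> B).
Hypothesis meetC : forall x y, meet x y = meet y x.
Hypothesis meetA : forall x y z, meet x (meet y z) = meet (meet x y) z.

Lemma meetCA x y z : meet x (meet y z) = meet y (meet x z).
Proof. now rewrite meetA, (meetC x y), <- meetA. Qed.

Lemma meetACA a b c d :
  meet (meet a b) (meet c d) = meet (meet a c) (meet b d).
Proof. now rewrite <- !meetA, (meetCA b c d). Qed.

End CommutativeSemigroup.

Section ComplementSplitting.

Variables (B : Type) (meet : B -> B -> B) (c : B -> B).
Hypothesis meetC : forall x y, meet x y = meet y x.
Hypothesis meetA : forall x y z, meet x (meet y z) = meet (meet x y) z.
Hypothesis complK : forall x, c (c x) = x.
Hypothesis compl_split : forall x y, c x = meet (c (meet x y)) (c (meet x (c y))).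

Lemma meet_compl_expand x y :
  meet x (c x) =
  meet (meet (c (meet x y)) (c (meet x (c y))))
       (meet (c (meet (c x) y)) (c (meet (c x) (c y)))).
Proof.
  rewrite meetC; f_equal.
  - apply compl_split.
  - pose proof (compl_split (c x) y) as Ex; now rewrite complK in Ex.
Qed.

Lemma meet_compl_const x y : meet x (c x) = meet y (c y).
Proof.
  rewrite (meet_compl_expand x y), (meet_compl_expand y x).
  rewrite (meetC y x), (meetC y (c x)), (meetC (c y) x), (meetC (c y) (c x)).
  now apply meetACA.
Qed.

End ComplementSplitting.

Theorem lemma2p6 (B : Type) (meet : B -> B -> B) (c : B -> B)
  (Hcomm : forall x y, meet x y = meet y x)
  (Hassoc : forall x y z, meet x (meet y z) = meet (meet x y) z)
  (Hinv : forall x, c (c x) = x)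
  (Hax : forall x y, c x = meet (c (meet x y)) (c (meet x (c y)))) :
  forall x z : B, meet (c (meet z (c z))) (c (meet x x)) = c x.
Proof.
  intros x z.
  rewrite (meet_compl_const B meet c Hcomm Hassoc Hinv Hax z x), Hcomm.
  symmetry; apply Hax.
Qed.
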